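(* Let $G$ be a 3-regular graph on $n$ vertices and $k$ a positive integer. For every $\delta$ with $\frac{2\log2}{k}\le\delta<n$, let $\eta=\frac{n}{\sqrt{n+\delta}}$. If $x\in\mathbb{R}^n$ satisfies $\|x\|_2=1$ and $\|x\|_1\le\eta$, then $p_G(x)\le\mathrm{MaxCut}(G)\le\mathrm{Opt}(G)$. Consequently, with $\mathcal{T}_\delta=\{x\in\mathbb{R}^n:\|x\|_2=1,\ \|x\|_1\ge\eta\}$, one has $\mathrm{Opt}(G)=\max_{x\in\mathcal{T}_\delta}p_G(x)$.
   Context: Let $A$ be the adjacency matrix of $G$ and $Q_G=\frac12\big(I-\frac13A\big)$. Define $\mathrm{MaxCut}(G)=\max_{x\in\{\pm1/\sqrt n\}^n}x^TQ_Gx$, $p_G(x)=(x^TQ_Gx)\prod_{i=1}^n(nx_i^2)^k$ for $x\in\mathbb{R}^n$, and $\mathrm{Opt}(G)=\max_{\|x\|_2=1}p_G(x)$. *)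

From mathcomp Require Import all_boot all_order all_algebra.
From mathcomp Require Import all_classical all_reals all_analysis.
Set Implicit Arguments. Unset Strict Implicit. Unset Printing Implicit Defensive.
Import Order.TTheory GRing.Theory Num.Theory.
Local Open Scope ring_scope.
Local Open Scope classical_set_scope.

Section Defs.
Variables (R : realType) (n : nat).

Definition simple_graph (e : rel 'I_n) : Prop :=
  (forall i j, e i j = e j i) /\ (forall i, ~~ e i i).

Definition regular (d : nat) (e : rel 'I_n) : Prop :=
  forall i, #|[set j | e i j]| = d.

Definition adjmx (e : rel 'I_n) : 'M[R]_n := \matrix_(i, j) (e i j)%:R.

Definition QG (e : rel 'I_n) : 'M[R]_n := 2^-1 *: (1%:M - 3^-1 *: adjmx e).

Definition qform (M : 'M[R]_n) (x : 'cV[R]_n) : R := (x^T *m M *m x) 0 0.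

Definition norm2 (x : 'cV[R]_n) : R := Num.sqrt (\sum_i x i 0 ^+ 2).
Definition norm1 (x : 'cV[R]_n) : R := \sum_i `|x i 0|.

Definition signvec (s : {ffun 'I_n -> bool}) : 'cV[R]_n :=
  \col_i ((if s i then 1 else -1) / Num.sqrt n%:R).

Definition MaxCut (e : rel 'I_n) : R :=
  \big[Num.max/qform (QG e) (signvec [ffun=> true])]_(s : {ffun 'I_n -> bool})
     qform (QG e) (signvec s).

Definition pG (k : nat) (e : rel 'I_n) (x : 'cV[R]_n) : R :=
  qform (QG e) x * \prod_i (n%:R * x i 0 ^+ 2) ^+ k.

(* Opt(G) = max over the unit sphere of p_G (supremum; the sphere is compact) *)
Definition Opt (k : nat) (e : rel 'I_n) : R :=
  sup [set pG k e x | x in [set x : 'cV[R]_n | norm2 x = 1]].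

End Defs.

From mathcomp Require Import all_boot all_order all_algebra.
From mathcomp Require Import all_classical all_reals all_analysis.
Import Order.TTheory GRing.Theory Num.Theory.
From mathcomp Require Import ring lra.
Import numFieldTopology.Exports numFieldNormedType.Exports.
Set Implicit Arguments. Unset Strict Implicit. Unset Printing Implicit Defensive.
Local Open Scope classical_set_scope.
Local Open Scope ring_scope.

(* Let G be a simple 3-regular graph on n vertices.
   (1) Spectral bound: x^T A x >= -3 |x|^2, hence x^T Q_G x <= |x|^2, so on the
       unit sphere p_G(x) <= prod_i (n x_i^2)^k.
   (2) MaxCut(G) >= 1/2: averaging x^T A x over all sign vectors gives 0, since
       E[s_i s_j] = 0 for i <> j and A has a zero diagonal; a sign vector with
       s^T A s <= 0 has s^T Q_G s >= 1/2.  Moreover p_G = x^T Q_G x on sign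
       vectors, so MaxCut(G) <= Opt(G).
   (3) AM-GM gives n^n prod_i (n x_i^2) <= |x|_1^(2n); with |x|_1 <= eta this is
       prod_i (n x_i^2) <= (n/(n+delta))^n, and Bernoulli's inequality together
       with k delta >= 2 ln 2 >= 1 turns the k-th power of this into <= 1/2.
       Hence p_G(x) <= 1/2 <= MaxCut(G) for small |x|_1.
   (4) The unit sphere is compact and p_G continuous, so Opt(G) is attained.
   The theorem follows: a maximiser either lies in T_delta, or it has small
   l1-norm, in which case Opt = MaxCut and a maximal sign vector (of l1-norm
   sqrt n >= eta) is a maximiser in T_delta. *)

Lemma qformE (R : realType) n (M : 'M[R]_n) (x : 'cV[R]_n) :
  qform M x = \sum_i \sum_j x i 0 * M i j * x j 0.
Proof.
rewrite /qform mxE exchange_big /=; apply: eq_bigr => j _.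
by rewrite mxE mulr_suml; apply: eq_bigr => i _; rewrite mxE.
Qed.

Lemma norm2_sum (R : realType) n (x : 'cV[R]_n) :
  norm2 x = 1 -> \sum_i x i 0 ^+ 2 = 1.
Proof.
move=> h; rewrite -[LHS]sqr_sqrtr; first by rewrite -/(norm2 x) h expr1n.
by apply: sumr_ge0 => i _; apply: sqr_ge0.
Qed.

Section QuadraticForm.
Variables (R : realType) (n : nat) (e : rel 'I_n).

Lemma qform_QG (x : 'cV[R]_n) :
  qform (QG R e) x = 2^-1 * (\sum_i x i 0 ^+ 2
     - 3^-1 * \sum_i \sum_j (e i j)%:R * x i 0 * x j 0).
Proof.
have diag : \sum_i x i 0 ^+ 2 = \sum_i \sum_j (i == j)%:R * x i 0 * x j 0.
  apply: eq_bigr => i _; rewrite (bigD1 i) //= big1 ?addr0 ?eqxx ?mul1r ?expr2 //.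
  by move=> j /negbTE; rewrite eq_sym => ->; rewrite !mul0r.
rewrite diag qformE [X in _ - X]mulr_sumr -sumrB mulr_sumr.
apply: eq_bigr => i _; rewrite [X in _ - X]mulr_sumr -sumrB mulr_sumr.
by apply: eq_bigr => j _; rewrite !mxE; ring.
Qed.

Lemma regular_row_sum d i : regular d e -> \sum_j (e i j)%:R = d%:R :> R.
Proof.
move=> reg; rewrite -natr_sum -(reg i) -sum1_card [in RHS]big_mkcond /=.
congr (_%:R); apply: eq_bigr => j _.
case: (boolP (e i j)) => eij; first by rewrite mem_set.
by rewrite memNset //; apply/negP.
Qed.

(* Smallest-eigenvalue bound for a d-regular graph: y^T A y >= -d |y|^2,
   from 0 <= sum_{ij} A_ij (y_i + y_j)^2 = 2 d |y|^2 + 2 y^T A y. *)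
Lemma adjacency_form_lb d (y : 'I_n -> R) :
  simple_graph e -> regular d e ->
  - d%:R * \sum_i y i ^+ 2 <= \sum_i \sum_j (e i j)%:R * y i * y j.
Proof.
move=> [esym _] reg; set T := \sum_i \sum_j _.
have sq_ge0 : 0 <= \sum_i \sum_j (e i j)%:R * (y i + y j) ^+ 2.
  by do 2!apply: sumr_ge0 => ? _; apply: mulr_ge0 => //; apply: sqr_ge0.
have expand : \sum_i \sum_j (e i j)%:R * (y i + y j) ^+ 2 =
   \sum_i \sum_j (e i j)%:R * y i ^+ 2 + \sum_i \sum_j (e i j)%:R * y j ^+ 2 + 2 * T.
  rewrite /T mulr_sumr -!big_split /=; apply: eq_bigr => i _.
  by rewrite mulr_sumr -!big_split /=; apply: eq_bigr => j _; ring.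
have rows : \sum_i \sum_j (e i j)%:R * y i ^+ 2 = d%:R * \sum_i y i ^+ 2.
  rewrite mulr_sumr; apply: eq_bigr => i _.
  by rewrite -mulr_suml (regular_row_sum i reg) mulrC.
have cols : \sum_i \sum_j (e i j)%:R * y j ^+ 2 = d%:R * \sum_i y i ^+ 2.
  rewrite exchange_big /= mulr_sumr; apply: eq_bigr => j _.
  rewrite -mulr_suml -(regular_row_sum j reg); congr (_ * _).
  by apply: eq_bigr => i _; rewrite esym.
rewrite expand rows cols in sq_ge0; lra.
Qed.

Lemma qform_QG_le (x : 'cV[R]_n) :
  simple_graph e -> regular 3 e -> qform (QG R e) x <= \sum_i x i 0 ^+ 2.
Proof.
move=> sge reg; rewrite qform_QG.
have := adjacency_form_lb (fun i => x i 0) sge reg; lra.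
Qed.

End QuadraticForm.

Definition sign (R : pzRingType) (b : bool) : R := if b then 1 else -1.

Lemma sign_sq (R : pzRingType) b : sign R b ^+ 2 = 1.
Proof. by case: b; rewrite /sign ?sqrrN expr1n. Qed.

(* For i <> j, flipping s i is an involution on sign patterns that negates
   s_i s_j, so these products cancel: E[s_i s_j] = 0. *)
Lemma sign_correlation_sum (R : realDomainType) n (i j : 'I_n) :
  i != j -> \sum_(s : {ffun 'I_n -> bool}) sign R (s i) * sign R (s j) = 0.
Proof.
move=> ij; pose flip (s : {ffun 'I_n -> bool}) : {ffun 'I_n -> bool} :=
  [ffun t => if t == i then ~~ s t else s t].
have flipK : involutive flip.
  by move=> s; apply/ffunP => t; rewrite !ffunE; case: (t == i); rewrite ?negbK.
have flip_neg s : sign R (flip s i) * sign R (flip s j) = - (sign R (s i) * sign R (s j)).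
  rewrite !ffunE eqxx eq_sym (negbTE ij).
  by case: (s i); case: (s j); rewrite /sign /=; ring.
have := reindex_inj (can_inj flipK) (op := +%R) (x := 0) (P := xpredT)
  (F := fun s : {ffun 'I_n -> bool} => sign R (s i) * sign R (s j)).
rewrite (eq_bigr _ (fun s _ => flip_neg s)) sumrN; lra.
Qed.

Section SignVectors.
Variables (R : realType) (n : nat).
Hypothesis n_gt0 : (0 < n)%N.

Lemma signvecE (s : {ffun 'I_n -> bool}) i :
  signvec R s i 0 = sign R (s i) / Num.sqrt n%:R.
Proof. by rewrite mxE. Qed.

Lemma signvec_sq (s : {ffun 'I_n -> bool}) i : signvec R s i 0 ^+ 2 = n%:R^-1.
Proof. by rewrite signvecE expr_div_n sign_sq sqr_sqrtr ?ler0n // div1r. Qed.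

Lemma signvec_sum_sq (s : {ffun 'I_n -> bool}) : \sum_i signvec R s i 0 ^+ 2 = 1.
Proof.
under eq_bigr do rewrite signvec_sq.
by rewrite sumr_const card_ord -[LHS]mulr_natr mulVf // pnatr_eq0 -lt0n.
Qed.

Lemma signvec_unit (s : {ffun 'I_n -> bool}) : norm2 (signvec R s) = 1.
Proof. by rewrite /norm2 signvec_sum_sq sqrtr1. Qed.

(* Sign vectors have all n x_i^2 = 1, so p_G agrees with the quadratic form. *)
Lemma pG_signvec k (e : rel 'I_n) (s : {ffun 'I_n -> bool}) :
  pG k e (signvec R s) = qform (QG R e) (signvec R s).
Proof.
rewrite /pG big1 ?mulr1 // => i _.
by rewrite signvec_sq mulfV ?expr1n // pnatr_eq0 -lt0n.
Qed.

Lemma norm1_signvec (s : {ffun 'I_n -> bool}) :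
  norm1 (signvec R s) = Num.sqrt n%:R.
Proof.
rewrite /norm1 (eq_bigr (fun=> (Num.sqrt n%:R)^-1)); last first.
  move=> i _; rewrite signvecE normrM normfV (ger0_norm (sqrtr_ge0 _)).
  by case: (s i); rewrite /sign ?normrN normr1 mul1r.
rewrite sumr_const card_ord -[_ *+ n]mulr_natl -{1}(sqr_sqrtr (ler0n R n)) expr2.
by rewrite mulfK // sqrtr_eq0 -ltNge ltr0n.
Qed.

Lemma qform_signvec (e : rel 'I_n) (s : {ffun 'I_n -> bool}) :
  qform (QG R e) (signvec R s) = 2^-1 * (1 - 3^-1 * (n%:R^-1 *
     \sum_i \sum_j (e i j)%:R * sign R (s i) * sign R (s j))).
Proof.
rewrite qform_QG signvec_sum_sq; congr (_ * (_ - _ * _)).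
rewrite mulr_sumr; apply: eq_bigr => i _; rewrite mulr_sumr; apply: eq_bigr => j _.
have sqrt_sq : Num.sqrt n%:R ^+ 2 = n%:R :> R by rewrite sqr_sqrtr ?ler0n.
have sqrt_neq0 : Num.sqrt n%:R != 0 :> R by rewrite sqrtr_eq0 -ltNge ltr0n.
rewrite !signvecE; move: sqrt_sq sqrt_neq0.
by set r := Num.sqrt n%:R => <- r_neq0; field.
Qed.

End SignVectors.

Section MaxCut.
Variables (R : realType) (n : nat) (e : rel 'I_n).

Definition cut_form (s : {ffun 'I_n -> bool}) : R :=
  \sum_i \sum_j (e i j)%:R * sign R (s i) * sign R (s j).

(* Averaged over all sign patterns the cut form vanishes (A has zero diagonal). *)
Lemma cut_form_sum : simple_graph e -> \sum_s cut_form s = 0.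
Proof.
move=> [_ irr]; rewrite exchange_big /=; apply: big1 => i _.
rewrite exchange_big /=; apply: big1 => j _.
under eq_bigr do rewrite -mulrA; rewrite -mulr_sumr.
have [<-|ij] := eqVneq i j; first by rewrite (negbTE (irr i)) mul0r.
by rewrite sign_correlation_sum // mulr0.
Qed.

Lemma cut_form_nonpos : simple_graph e -> exists s, cut_form s <= 0.
Proof.
move=> sge; case: (boolP [exists s, cut_form s <= 0]) => [/existsP // | /existsPn all_pos].
have pos s : 0 < cut_form s by rewrite ltNge all_pos.
have : 0 <= \sum_(s | s != [ffun=> true]) cut_form s by apply: sumr_ge0 => s _; exact: ltW.
have := pos [ffun=> true]; have := cut_form_sum sge.
rewrite (bigD1 [ffun=> true]) //=; lra.
Qed.

Lemma MaxCut_ge_half : (0 < n)%N -> simple_graph e -> 2^-1 <= MaxCut R e.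
Proof.
move=> n_gt0 sge; have [s cut_le0] := cut_form_nonpos sge.
apply: le_trans (le_bigmax _ _ s); rewrite qform_signvec // -/(cut_form s).
have : n%:R^-1 * cut_form s <= 0 by rewrite mulr_ge0_le0 // invr_ge0 ler0n.
lra.
Qed.

Lemma MaxCut_attained : exists s, MaxCut R e = qform (QG R e) (signvec R s).
Proof.
apply: (big_ind (fun y => exists s, y = qform (QG R e) (signvec R s))).
- by exists [ffun=> true].
- move=> _ _ [s1 ->] [s2 ->].
  by case: leP => _; [exists s2 | exists s1].
- by move=> s _; exists s.
Qed.

End MaxCut.

Lemma AMGM_scaled (R : realFieldType) n (E : 'I_n -> R) :
  (forall i, 0 <= E i) -> \prod_i (n%:R * E i) <= (\sum_i E i) ^+ n.
Proof.
move=> E_ge0; rewrite (eq_bigr (fun i => E i *+ n)) => [|i _]; last exact: mulr_natl.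
have := @leif_AGM_scaled R _ predT E; rewrite cardT size_enum_ord.
by case=> [i _ | //]; exact: mulrn_wge0.
Qed.

Lemma bernoulli_ineq (R : realDomainType) (t : R) m :
  0 <= t -> 1 + m%:R * t <= (1 + t) ^+ m.
Proof.
move=> t_ge0; elim: m => [|m IH]; first by rewrite mul0r addr0 expr0.
rewrite exprSr -natr1.
have : 0 <= (1 + t) ^+ m by apply: exprn_ge0; lra.
have : 0 <= m%:R :> R by apply: ler0n.
nra.
Qed.

Lemma ln2_ge_half (R : realType) : 2^-1 <= ln (2 : R).
Proof.
have := @le_ln1Dx R (- 2^-1) ltac:(lra).
have -> : 1 + - 2^-1 = (2 : R)^-1 by field.
rewrite lnV ?posrE //; lra.
Qed.

Lemma threshold_gt0 (R : realType) k (d : R) :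
  (0 < k)%N -> 2 * ln 2 / k%:R <= d -> 0 < d.
Proof.
move=> k_gt0; apply: lt_le_trans; have := ln2_ge_half R.
by rewrite -(ltr0n R) in k_gt0; move=> ?; apply: divr_gt0 => //; lra.
Qed.

(* The numerical heart of the threshold: if delta >= 2 ln 2 / k then
   ((n/(n+delta))^n)^k <= 1/2, since (1 + delta/n)^(nk) >= (1+delta)^k >= 1 + k delta >= 2. *)
Lemma ratio_pow_le_half (R : realType) n k (d : R) : (0 < n)%N -> (0 < k)%N ->
  2 * ln 2 / k%:R <= d -> ((n%:R / (n%:R + d)) ^+ n) ^+ k <= 2^-1.
Proof.
move=> n_gt0 k_gt0 hd.
have k_pos : 0 < k%:R :> R by rewrite ltr0n.
have n_pos : 0 < n%:R :> R by rewrite ltr0n.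
have kd_ge1 : 1 <= k%:R * d.
  have := ln2_ge_half R; move: hd; rewrite ler_pdivrMr // [d * _]mulrC; lra.
have d_pos : 0 < d := threshold_gt0 k_gt0 hd.
set a := 1 + d / n%:R.
have -> : n%:R / (n%:R + d) = a^-1 by rewrite /a; field; apply/andP; split; lra.
have a_pos : 0 < a by have := divr_gt0 d_pos n_pos; rewrite /a; lra.
rewrite exprVn exprVn lef_pV2 ?posrE ?exprn_gt0 //.
have pow_n : 1 + d <= a ^+ n.
  have := @bernoulli_ineq R (d / n%:R) n (ltW (divr_gt0 d_pos n_pos)).
  by rewrite mulrC divfK // gt_eqF.
have pow_k : 1 + k%:R * d <= (1 + d) ^+ k by apply: bernoulli_ineq; lra.
have : (1 + d) ^+ k <= (a ^+ n) ^+ k by apply: lerXn2r; rewrite ?nnegrE //; lra.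
lra.
Qed.

Section SmallL1Norm.
Variables (R : realType) (n : nat).

(* AM-GM applied to |x_i| bounds the product term by the l1-norm. *)
Lemma prod_le_norm1 (x : 'cV[R]_n) :
  n%:R ^+ n * \prod_i (n%:R * x i 0 ^+ 2) <= (norm1 x ^+ n) ^+ 2.
Proof.
have -> : n%:R ^+ n * \prod_i (n%:R * x i 0 ^+ 2) = (\prod_i (n%:R * `|x i 0|)) ^+ 2.
  have -> : n%:R ^+ n = \prod_(i < n) (n%:R : R) by rewrite prodr_const card_ord.
  rewrite -prodrXl -big_split /=.
  by apply: eq_bigr => i _; rewrite exprMn real_normK ?num_real // mulrA -expr2.
apply: lerXn2r; rewrite ?nnegrE; last exact: AMGM_scaled.
- by apply: prodr_ge0 => i _; apply: mulr_ge0.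
- by apply: exprn_ge0; apply: sumr_ge0.
Qed.

Lemma pG_prodE k (e : rel 'I_n) (x : 'cV[R]_n) :
  pG k e x = qform (QG R e) x * (\prod_i (n%:R * x i 0 ^+ 2)) ^+ k.
Proof. by rewrite /pG prodrXl. Qed.

Lemma pG_small_norm1 k (e : rel 'I_n) (d : R) (x : 'cV[R]_n) :
  (0 < n)%N -> (0 < k)%N -> simple_graph e -> regular 3 e ->
  2 * ln 2 / k%:R <= d -> norm2 x = 1 ->
  norm1 x <= n%:R / Num.sqrt (n%:R + d) -> pG k e x <= 2^-1.
Proof.
move=> n_gt0 k_gt0 sge reg hd x_unit x_small.
have d_ge0 : 0 <= d by exact/ltW/(threshold_gt0 k_gt0 hd).
have n_pos : 0 < n%:R :> R by rewrite ltr0n.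
set P := \prod_i (n%:R * x i 0 ^+ 2).
have P_ge0 : 0 <= P by apply: prodr_ge0 => i _; apply: mulr_ge0 => //; apply: sqr_ge0.
have q_le1 : qform (QG R e) x <= 1 by rewrite -(norm2_sum x_unit) qform_QG_le.
have eta_sq : (n%:R / Num.sqrt (n%:R + d)) ^+ 2 = n%:R ^+ 2 / (n%:R + d).
  by rewrite expr_div_n sqr_sqrtr //; lra.
have norm1_pow : (norm1 x ^+ n) ^+ 2 <= n%:R ^+ n * (n%:R / (n%:R + d)) ^+ n.
  rewrite -exprM mulnC exprM -exprMn mulrA -expr2 -eta_sq.
  have norm1_ge0 : 0 <= norm1 x by apply: sumr_ge0.
  apply: lerXn2r; rewrite ?nnegrE ?sqr_ge0 //.
  by apply: lerXn2r; rewrite ?nnegrE ?divr_ge0 ?sqrtr_ge0.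
have P_le : P <= (n%:R / (n%:R + d)) ^+ n.
  rewrite -(@ler_pM2l _ (n%:R ^+ n)) ?exprn_gt0 //.
  exact: le_trans (prod_le_norm1 x) norm1_pow.
rewrite pG_prodE -/P; apply: le_trans (ler_piMl _ q_le1) _; first exact: exprn_ge0.
apply: le_trans (ratio_pow_le_half n_gt0 k_gt0 hd).
by apply: lerXn2r; rewrite ?nnegrE ?exprn_ge0 ?divr_ge0 //; lra.
Qed.

(* Sign vectors have l1-norm sqrt n >= eta, so they lie in T_delta. *)
Lemma eta_le_sqrt (d : R) : (0 < n)%N -> 0 <= d ->
  n%:R / Num.sqrt (n%:R + d) <= Num.sqrt n%:R.
Proof.
move=> n_gt0 d_ge0; have n_pos : 0 < n%:R :> R by rewrite ltr0n.
rewrite ler_pdivrMr ?sqrtr_gt0; last lra.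
rewrite -{1}(sqr_sqrtr (ler0n R n)) expr2 ler_wpM2l ?sqrtr_ge0 //.
by rewrite ler_sqrt; lra.
Qed.

End SmallL1Norm.

Lemma continuous_mul (K : numFieldType) (T : topologicalType) (f g : T -> K) :
  continuous f -> continuous g -> continuous (fun x => f x * g x).
Proof. by move=> f_cont g_cont x; exact: continuousM (f_cont x) (g_cont x). Qed.

Lemma continuous_exprn (R : realType) (T : topologicalType) (f : T -> R) m :
  continuous f -> continuous (fun x => f x ^+ m).
Proof.
move=> f_cont x; apply: (@continuous_comp _ _ _ f (fun r : R => r ^+ m)).
  exact: f_cont.
exact: exprn_continuous.
Qed.

Section Compactness.
Variables (R : realType) (n : nat).

(* The unit sphere of row vectors is a closed subset of the cube [-1,1]^n. *)
Lemma unit_sphere_compact :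
  compact [set v : 'rV[R]_n | \sum_i v ord0 i ^+ 2 = 1].
Proof.
have cube := @rV_compact R n (fun=> `[-1, 1]%classic) (fun=> @segment_compact R (-1) 1).
have sum_sq_cont : continuous (fun v : 'rV[R]_n => \sum_i v ord0 i ^+ 2).
  apply: (continuous_big (op := +%R)) => [|i _]; first exact: add_continuous.
  exact/continuous_exprn/coord_continuous.
have sphere_closed : closed [set v : 'rV[R]_n | \sum_i v ord0 i ^+ 2 = 1] :=
  preimage_closed (fun v _ => sum_sq_cont v) (@closed_eq R 1).
apply: subclosed_compact sphere_closed cube _.
move=> v v_unit i /=; rewrite in_itv /= -ler_norml -(expr_le1 (n := 2)) //.
rewrite real_normK ?num_real // -v_unit (bigD1 i) //= lerDl.
by apply: sumr_ge0 => *; apply: sqr_ge0.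
Qed.

Lemma pG_continuous k (e : rel 'I_n) :
  continuous (fun v : 'rV[R]_n => pG k e v^T).
Proof.
have coord i : continuous (fun v : 'rV[R]_n => (v^T) i 0).
  by under eq_fun do rewrite mxE; exact: coord_continuous.
have quadratic : continuous (fun v : 'rV[R]_n =>
    \sum_i \sum_j (v^T) i 0 * QG R e i j * (v^T) j 0).
  apply: (continuous_big (op := +%R)) => [|i _]; first exact: add_continuous.
  apply: (continuous_big (op := +%R)) => [|j _]; first exact: add_continuous.
  by apply: continuous_mul; [apply: continuous_mul; [exact: coord | exact: cst_continuous] | exact: coord].
have product : continuous (fun v : 'rV[R]_n => \prod_i (n%:R * (v^T) i 0 ^+ 2) ^+ k).
  apply: (@continuous_big R _ *%R 1 xpredT) => [|i _]; first exact: mul_continuous.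
  apply: continuous_exprn; apply: continuous_mul; first exact: cst_continuous.
  exact/continuous_exprn/coord.
rewrite /pG; under eq_fun do rewrite qformE.
exact: continuous_mul.
Qed.

Lemma pG_maximiser k (e : rel 'I_n) : (0 < n)%N ->
  exists2 c : 'cV[R]_n, norm2 c = 1 &
    forall y : 'cV[R]_n, norm2 y = 1 -> pG k e y <= pG k e c.
Proof.
move=> n_gt0; pose S := [set v : 'rV[R]_n | \sum_i v ord0 i ^+ 2 = 1].
have sum_tr (v : 'rV[R]_n) : \sum_i (v^T) i 0 ^+ 2 = \sum_i v ord0 i ^+ 2.
  by apply: eq_bigr => i _; rewrite mxE.
have S_tr (y : 'cV[R]_n) : norm2 y = 1 -> S y^T.
  by move=> /norm2_sum; rewrite /S /= -sum_tr trmxK.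
have [||c Sc c_max] :=
  @compact_EVT_max _ R (fun v : 'rV[R]_n => pG k e v^T) S _ unit_sphere_compact.
- by exists (signvec R [ffun=> true])^T; apply: S_tr; exact: signvec_unit.
- exact/continuous_subspaceT/pG_continuous.
exists c^T => [|y /S_tr y_unit].
  by move: Sc; rewrite inE /norm2 sum_tr => ->; rewrite sqrtr1.
by have := c_max _ (mem_set y_unit); rewrite trmxK.
Qed.

Lemma Opt_maximiser k (e : rel 'I_n) (c : 'cV[R]_n) :
  norm2 c = 1 -> (forall y, norm2 y = 1 -> pG k e y <= pG k e c) ->
  Opt R k e = pG k e c.
Proof.
move=> c_unit c_max; apply/eqP; rewrite eq_le; apply/andP; split.
  by apply: ge_sup; [exists (pG k e c), c | move=> _ [y /c_max ? <-]].
apply: sup_upper_bound; last by exists c.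
by split; [exists (pG k e c), c | exists (pG k e c) => _ [y /c_max ? <-]].
Qed.

End Compactness.

Theorem mainTheorem18 (R : realType) (n : nat) (e : rel 'I_n) (k : nat) (delta : R) :
  simple_graph e -> regular 3 e -> (0 < k)%N ->
  2 * ln 2 / k%:R <= delta -> delta < n%:R ->
  let eta := n%:R / Num.sqrt (n%:R + delta) in
  (forall x : 'cV[R]_n, norm2 x = 1 -> norm1 x <= eta ->
     pG k e x <= MaxCut R e /\ MaxCut R e <= Opt R k e) /\
  (exists2 x : 'cV[R]_n, norm2 x = 1 /\ eta <= norm1 x & pG k e x = Opt R k e) /\
  (forall y : 'cV[R]_n, norm2 y = 1 -> eta <= norm1 y -> pG k e y <= Opt R k e).
Proof.
move=> sge reg k_gt0 hd hdn eta.
have delta_pos := threshold_gt0 k_gt0 hd.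
have n_gt0 : (0 < n)%N by rewrite -(ltr0n R); lra.
have [c c_unit c_max] := pG_maximiser R k e n_gt0.
have Opt_c := Opt_maximiser c_unit c_max.
have [s MaxCut_s] := MaxCut_attained R e.
have MaxCut_le_Opt : MaxCut R e <= Opt R k e.
  by rewrite Opt_c MaxCut_s -(pG_signvec R n_gt0 k) c_max ?signvec_unit.
have small x : norm2 x = 1 -> norm1 x <= eta -> pG k e x <= MaxCut R e.
  move=> x_unit x_small; apply: le_trans (MaxCut_ge_half R n_gt0 sge).
  exact: pG_small_norm1 x_unit x_small.
split; first by move=> x x_unit x_small; split; [exact: small |].
split; last by move=> y y_unit _; rewrite Opt_c c_max.
have [eta_le_c | c_lt_eta] := leP eta (norm1 c); first by exists c.
exists (signvec R s); first split; [exact: signvec_unit | |].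
  by rewrite norm1_signvec // eta_le_sqrt // ltW.
apply/eqP; rewrite (pG_signvec R n_gt0) -MaxCut_s eq_le MaxCut_le_Opt Opt_c /=.
exact: small (ltW c_lt_eta).
Qed.
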